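(* Let $\Gamma\subseteq[0,1]$ be a set which satisfies the DCC. Then there exist real numbers $\epsilon,\delta\in(0,1]$ such that $$\{\textstyle\sum_i n_ib_i'-1>0\mid b_i'\in\Gamma_\epsilon\cap[0,1],\ n_i\in\mathbb{Z}_{\ge0}\}\subseteq[\delta,+\infty),$$ where $\Gamma_\epsilon:=\bigcup_{b\in\Gamma}[b-\epsilon,b]$.
   Context: A set $\Gamma\subseteq\mathbb{R}$ satisfies the descending chain condition (DCC) if every non-increasing sequence in $\Gamma$ stabilizes. Sums $\sum_i n_ib_i'$ are finite sums. *)

From Stdlib Require Import Reals List.
Open Scope R_scope.

Definition DCC (Gamma : R -> Prop) : Prop :=
  forall u : nat -> R,
    (forall k, Gamma (u k)) ->
    (forall k, u (S k) <= u k) ->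
    exists N, forall k, (N <= k)%nat -> u k = u N.

Definition Gamma_eps (Gamma : R -> Prop) (eps : R) (x : R) : Prop :=
  exists b, Gamma b /\ b - eps <= x <= b.

Definition wsum (l : list (nat * R)) : R :=
  fold_right (fun p acc => INR (fst p) * snd p + acc) 0 l.

(** Under the DCC, [Gamma] and every set of sums of at most [N] elements of
    [Gamma] have no accumulation point from the right (for sums this follows
    from Bolzano-Weierstrass).  Positive elements of [Gamma] are bounded below
    by some [g], and each [b' in Gamma_eps] is either [0] or within [eps] below
    some [b >= g].  So a sum [w = sum n_i b_i'] lies within [m * eps] below a
    sum [s] of [m] elements of [Gamma] with [m * (g - eps) <= w]; if [w] is
    close to [1] then [m < N], and [s] would fall in the gap of the sums of at
    most [N] elements just above [1]. *)

From Stdlib Require Import Reals List Lra Lia Classical ClassicalEpsilon.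
Open Scope R_scope.

Definition no_right_accumulation (S : R -> Prop) : Prop :=
  forall t, exists d, 0 < d /\ forall s, S s -> ~ (t < s < t + d).

Definition add_set (A B : R -> Prop) (x : R) : Prop :=
  exists a b, A a /\ B b /\ x = a + b.

Fixpoint sums_at_most (G : R -> Prop) (n : nat) : R -> Prop :=
  match n with
  | O => fun x => x = 0
  | S n => add_set (fun a => G a \/ a = 0) (sums_at_most G n)
  end.

Lemma DCC_no_right_accumulation (G : R -> Prop) :
  DCC G -> no_right_accumulation G.
Proof.
  intros Hdcc t. apply NNPP; intro Hacc.
  assert (Hnext : forall x, exists s, t < x -> G s /\ t < s < x).
  { intro x. destruct (Rlt_dec t x) as [Htx | Htx].
    - apply NNPP; intro Hno; apply Hacc; exists (x - t); split; [lra |].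
      intros s Hs Hst; apply Hno; exists s; intros _; split; [exact Hs | lra].
    - exists 0; intro; lra. }
  destruct (choice _ Hnext) as [c Hc].
  set (u k := Nat.iter (S k) c (t + 1)).
  assert (Hu : forall k, G (u k) /\ t < u k).
  { intro k. unfold u.
    assert (Hiter : t < Nat.iter k c (t + 1)).
    { induction k as [| k IH]; simpl; [lra | apply (Hc _ IH)]. }
    destruct (Hc _ Hiter) as [HG Hbetween]. simpl. split; [exact HG | lra]. }
  assert (Hdecr : forall k, u (S k) < u k).
  { intro k. destruct (Hc (u k)) as [_ Hbetween]; [apply Hu | apply Hbetween]. }
  destruct (Hdcc u (fun k => proj1 (Hu k)) (fun k => Rlt_le _ _ (Hdecr k)))
    as [N HN].
  specialize (HN (S N) (Nat.le_succ_diag_r N)). specialize (Hdecr N). lra.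
Qed.

Lemma no_right_accumulation_singleton (c : R) :
  no_right_accumulation (fun x => x = c).
Proof.
  intro t. destruct (Rlt_dec t c).
  - exists (c - t). split; [lra |]. intros s -> H; lra.
  - exists 1. split; [lra |]. intros s -> H; lra.
Qed.

Lemma no_right_accumulation_union (A B : R -> Prop) :
  no_right_accumulation A -> no_right_accumulation B ->
  no_right_accumulation (fun x => A x \/ B x).
Proof.
  intros HA HB t.
  destruct (HA t) as [dA [HdA HgapA]], (HB t) as [dB [HdB HgapB]].
  exists (Rmin dA dB). split; [apply Rmin_pos; lra |].
  pose proof (Rmin_l dA dB). pose proof (Rmin_r dA dB).
  intros s [Hs | Hs] Hst; [apply (HgapA s Hs) | apply (HgapB s Hs)]; lra.
Qed.

Lemma no_right_accumulation_add (A B : R -> Prop) (lo hi : R) :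
  (forall a, A a -> lo <= a <= hi) ->
  no_right_accumulation A -> no_right_accumulation B ->
  no_right_accumulation (add_set A B).
Proof.
  intros Hbd HA HB t. apply NNPP; intro Hacc.
  assert (Hclose : forall k : nat, exists ab : R * R,
    A (fst ab) /\ B (snd ab) /\ t < fst ab + snd ab < t + / INR (S k)).
  { intro k. apply NNPP; intro Hno; apply Hacc; exists (/ INR (S k)); split.
    - apply Rinv_0_lt_compat, lt_0_INR; lia.
    - intros x (a & b & Ha & Hb & ->) Hx; apply Hno; exists (a, b); auto. }
  destruct (choice _ Hclose) as [f Hf].
  destruct (Bolzano_Weierstrass (fun k => fst (f k)) _ (compact_P3 lo hi))
    as [al Hal].
  { intro k. apply Hbd, Hf. }
  destruct (HA al) as [dA [HdA HgapA]].
  destruct (HB (t - al)) as [dB [HdB HgapB]].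
  destruct (archimed_cor1 (dB / 2)) as [N [HN HN0]]; [lra |].
  assert (Hr : 0 < Rmin dA (dB / 2)) by (apply Rmin_pos; lra).
  destruct (Hal (disc al (mkposreal _ Hr)) N) as [p [Hp Hap]].
  { exists (mkposreal _ Hr). intros y Hy; exact Hy. }
  unfold disc in Hap; simpl in Hap. apply Rabs_def2 in Hap.
  destruct (Hf p) as [Ha [Hb Hab]].
  set (a := fst (f p)) in *. set (b := snd (f p)) in *.
  assert (Hinv : / INR (S p) <= / INR N).
  { apply Rinv_le_contravar; [apply lt_0_INR; lia | apply le_INR; lia]. }
  pose proof (Rmin_l dA (dB / 2)). pose proof (Rmin_r dA (dB / 2)).
  (* [a] cannot lie in the gap of [A] above [al], so [b] lies in that of [B]. *)
  assert (Ha_le : a <= al).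
  { apply Rnot_lt_le; intro Hlt. apply (HgapA a Ha). lra. }
  apply (HgapB b Hb). lra.
Qed.

Lemma no_right_accumulation_sums_at_most (G : R -> Prop) (n : nat) :
  (forall x, G x -> 0 <= x <= 1) -> no_right_accumulation G ->
  no_right_accumulation (sums_at_most G n).
Proof.
  intros Hbd HG. induction n as [| n IH]; simpl.
  - apply no_right_accumulation_singleton.
  - apply (no_right_accumulation_add _ _ 0 1); [| | exact IH].
    + intros a [Ha | ->]; [apply Hbd, Ha | lra].
    + apply no_right_accumulation_union;
        [exact HG | apply no_right_accumulation_singleton].
Qed.

Lemma sums_at_most_mono (G : R -> Prop) (m n : nat) (s : R) :
  (m <= n)%nat -> sums_at_most G m s -> sums_at_most G n s.
Proof.
  intros Hmn. induction Hmn as [| n _ IH]; [easy |].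
  intro Hs. exists 0, s. repeat split; auto. ring.
Qed.

Lemma nonneg_gap_above_zero (G : R -> Prop) :
  (forall b, G b -> 0 <= b) -> no_right_accumulation G ->
  exists g, 0 < g <= 1 /\ forall b, G b -> b = 0 \/ g <= b.
Proof.
  intros Hnneg HG. destruct (HG 0) as [d [Hd Hgap]].
  exists (Rmin d 1). pose proof (Rmin_l d 1). pose proof (Rmin_r d 1).
  split; [split; [apply Rmin_pos |]; lra |].
  intros b Hb. destruct (Rle_lt_dec (Rmin d 1) b) as [Hle | Hlt]; [now right |].
  left. pose proof (Hnneg b Hb).
  destruct (Req_dec b 0) as [| Hb0]; [easy |].
  exfalso. apply (Hgap b Hb). lra.
Qed.

Section Perturbed_sums.

Variables (Gamma : R -> Prop) (g eps : R).
Hypothesis Hgap : forall b, Gamma b -> b = 0 \/ g <= b.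

Definition close_to_sums (w : R) : Prop :=
  exists m s, sums_at_most Gamma m s /\
    s - INR m * eps <= w <= s /\ INR m * (g - eps) <= w.

Lemma close_to_sums_add (w b' : R) :
  Gamma_eps Gamma eps b' -> 0 <= b' ->
  close_to_sums w -> close_to_sums (w + b').
Proof.
  intros [b [Hb Hb']] Hb'0 (m & s & Hs & Hws & Hwm).
  destruct (Hgap b Hb) as [-> | Hgb].
  - exists m, s. repeat split; auto; lra.
  - exists (S m), (b + s). rewrite S_INR. repeat split; try lra.
    exists b, s. auto.
Qed.

Lemma close_to_sums_wsum (l : list (nat * R)) :
  (forall p, In p l -> Gamma_eps Gamma eps (snd p) /\ 0 <= snd p) ->
  close_to_sums (wsum l).
Proof.
  induction l as [| [n b'] l IH]; intro Hl.
  - exists O, 0. simpl. repeat split; auto; lra.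
  - change (close_to_sums (INR n * b' + wsum l)).
    destruct (Hl (n, b') (in_eq _ _)) as [Hb' Hb'0]; simpl in Hb', Hb'0.
    assert (Hrest : close_to_sums (wsum l)) by (apply IH; auto using in_cons).
    clear IH Hl. induction n as [| n IHn].
    + now rewrite Rmult_0_l, Rplus_0_l.
    + rewrite S_INR.
      replace ((INR n + 1) * b' + wsum l) with (INR n * b' + wsum l + b')
        by ring.
      now apply close_to_sums_add, IHn.
Qed.

End Perturbed_sums.

Theorem lemma3p4 (Gamma : R -> Prop)
  (HG : forall x, Gamma x -> 0 <= x <= 1)
  (Hdcc : DCC Gamma) :
  exists eps delta : R,
    0 < eps <= 1 /\ 0 < delta <= 1 /\
    forall l : list (nat * R),
      (forall p, In p l -> Gamma_eps Gamma eps (snd p) /\ 0 <= snd p <= 1) ->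
      wsum l - 1 > 0 -> wsum l - 1 >= delta.
Proof.
  pose proof (DCC_no_right_accumulation _ Hdcc) as Hacc.
  destruct (nonneg_gap_above_zero Gamma) as [g [Hg Hgap]];
    [intros b Hb; apply HG, Hb | exact Hacc |].
  destruct (INR_unbounded (4 / g)) as [N HN].
  assert (HNg : 2 < INR N * (g / 2)).
  { apply (Rmult_lt_compat_r (g / 2)) in HN; [| lra].
    replace (4 / g * (g / 2)) with 2 in HN by (field; lra). exact HN. }
  destruct (no_right_accumulation_sums_at_most Gamma N HG Hacc 1)
    as [d [Hd HgapN]].
  assert (HNpos : 0 < INR N) by (pose proof (pos_INR N); nra).
  set (eps := Rmin (g / 2) (d / (2 * INR N))).
  assert (HepsN : eps * INR N <= d / 2).
  { assert (eps <= d / (2 * INR N)) by apply Rmin_r.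
    replace (d / 2) with (d / (2 * INR N) * INR N) by (field; lra). nra. }
  assert (Heps : 0 < eps <= g / 2).
  { split; [apply Rmin_pos; apply Rdiv_lt_0_compat; lra | apply Rmin_l]. }
  exists eps, (Rmin (d / 2) 1).
  pose proof (Rmin_l (d / 2) 1). pose proof (Rmin_r (d / 2) 1).
  split; [lra |]. split; [split; [apply Rmin_pos |]; lra |].
  intros l Hl Hw. apply Rnot_lt_ge; intro Hclose.
  destruct (close_to_sums_wsum Gamma g eps Hgap l) as (m & s & Hs & Hws & Hwm).
  { intros p Hp. destruct (Hl p Hp) as [? []]. auto. }
  assert (HmN : (m < N)%nat) by (apply INR_lt; nra).
  apply (HgapN s (sums_at_most_mono _ _ _ _ (Nat.lt_le_incl _ _ HmN) Hs)).
  apply lt_INR in HmN. pose proof (pos_INR m). nra.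
Qed.
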